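(* Let $(U,A)$ and $(V,A)$ be left Hopf algebroids over the same $\Bbbk$-algebra $A$, let $\pi\colon U\to V$ be a surjective morphism of left Hopf algebroids, and let $B$ be its left Hopf kernel. Then: (i) $B$ is an $A$-subring of $U$ with unit map $s_U\colon A\to B$, and its elements commute with $t_U(A)$, i.e. $b\triangleleft a=t_U(a)\,b=b\,t_U(a)=a\blacktriangleright b$ for all $b\in B$, $a\in A$; (ii) the assignment $u\otimes b\mapsto u\rightharpoonup b:=u_+\,b\,u_-$ is a well-defined left $U$-action $U\otimes B\to B$ (landing in $B$), which descends to ${}_\blacktriangleright U_\blacktriangleleft\otimes_{A^e}{}_\triangleright B_\blacktriangleleft\to B$ and satisfies $u\rightharpoonup1_B=s_U(\varepsilon_U(u))$ and $u\rightharpoonup(bb')=(u_{(1)}\rightharpoonup b)(u_{(2)}\rightharpoonup b')$ for all $u\in U$, $b,b'\in B$; thus $B$ is a left $U$-module algebra.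
   Context: A left bialgebroid $(U,A,\Delta,\varepsilon,s,t)$ over a $\Bbbk$-algebra $A$: $\Bbbk$-algebra $U$ with algebra map $s$ and algebra anti-map $t$ from $A$ with commuting images, four commuting $A$-actions $a\blacktriangleright b\triangleright u\triangleleft c\blacktriangleleft d:=t(c)s(b)\,u\,s(d)t(a)$, a coassociative counital unital multiplicative comultiplication $\Delta\colon U\to U_\triangleleft\otimes_A{}_\triangleright U$, $u\mapsto u_{(1)}\otimes u_{(2)}$, landing in the Takeuchi product (where $a\blacktriangleright u_{(1)}\otimes u_{(2)}=u_{(1)}\otimes u_{(2)}\blacktriangleleft a$), with $\Delta(a\blacktriangleright b\triangleright u\triangleleft c\blacktriangleleft d)=(b\triangleright u_{(1)}\blacktriangleleft d)\otimes(a\blacktriangleright u_{(2)}\triangleleft c)$, and counit $\varepsilon\colon U\to A$ with $\varepsilon(b\triangleright u\triangleleft c)=b\varepsilon(u)c$, $\varepsilon(a\blacktriangleright u)=\varepsilon(u\blacktriangleleft a)$, $\varepsilon(uv)=\varepsilon(u\blacktriangleleft\varepsilon(v))$, $s(\varepsilon(u_{(1)}))u_{(2)}=u=t(\varepsilon(u_{(2)}))u_{(1)}$. It is a left Hopf algebroid if $\beta\colon{}_\blacktriangleright U\otimes_{A^{op}}U_\triangleleft\to U_\triangleleft\otimes_A{}_\triangleright U$, $u\otimes v\mapsto u_{(1)}\otimes u_{(2)}v$ is bijective (the domain being $U\otimes U$ modulo $u\,t(a)\otimes v-u\otimes t(a)v$); write $u_+\otimes u_-:=\beta^{-1}(u\otimes1)$.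 A morphism is an algebra map commuting with $\Delta,\varepsilon,s,t$. The left Hopf kernel of surjective $\pi$ is $B=\{u\in U: u_{(1)}\otimes_A\pi(u_{(2)})=u\otimes_A1_V\}$. *)

(* Left bialgebroids / left Hopf algebroids, encoded with
   Sweedler-style representatives (finite lists of pairs) of elements of
   tensor products; equality in a tensor product X_ra (x)_A la_Y is encoded by
   its universal property (equal images under every A-balanced biadditive map
   into an arbitrary abelian group). *)
From HB Require Import structures.
From mathcomp Require Import all_boot all_algebra.
From Stdlib Require Import ClassicalEpsilon.
Set Implicit Arguments. Unset Strict Implicit. Unset Printing Implicit Defensive.
Import GRing.Theory.
Local Open Scope ring_scope.

Definition tsum (X Y : Type) (M : zmodType) (f : X -> Y -> M) (l : seq (X * Y)) : M :=
  \sum_(p <- l) f p.1 p.2.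

Definition balanced2 (A : Type) (X Y M : zmodType)
  (ra : X -> A -> X) (la : A -> Y -> Y) (f : X -> Y -> M) : Prop :=
  [/\ forall x y1 y2, f x (y1 + y2) = f x y1 + f x y2,
      forall x1 x2 y, f (x1 + x2) y = f x1 y + f x2 y &
      forall x a y, f (ra x a) y = f x (la a y)].

(* l1 and l2 represent the same element of X (x)_A Y *)
Definition teq2 (A : Type) (X Y : zmodType)
  (ra : X -> A -> X) (la : A -> Y -> Y) (l1 l2 : seq (X * Y)) : Prop :=
  forall (M : zmodType) (f : X -> Y -> M), balanced2 ra la f -> tsum f l1 = tsum f l2.

Definition tsum3 (X Y Z : Type) (M : zmodType) (f : X -> Y -> Z -> M)
  (l : seq (X * Y * Z)) : M := \sum_(p <- l) f p.1.1 p.1.2 p.2.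

Definition balanced3 (A : Type) (X Y Z M : zmodType)
  (ra1 : X -> A -> X) (la1 : A -> Y -> Y) (ra2 : Y -> A -> Y) (la2 : A -> Z -> Z)
  (f : X -> Y -> Z -> M) : Prop :=
  [/\ forall x1 x2 y z, f (x1 + x2) y z = f x1 y z + f x2 y z,
      forall x y1 y2 z, f x (y1 + y2) z = f x y1 z + f x y2 z,
      forall x y z1 z2, f x y (z1 + z2) = f x y z1 + f x y z2,
      forall x a y z, f (ra1 x a) y z = f x (la1 a y) z &
      forall x y a z, f x (ra2 y a) z = f x y (la2 a z)].

Definition teq3 (A : Type) (X Y Z : zmodType)
  (ra1 : X -> A -> X) (la1 : A -> Y -> Y) (ra2 : Y -> A -> Y) (la2 : A -> Z -> Z)
  (l1 l2 : seq (X * Y * Z)) : Prop :=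
  forall (M : zmodType) (f : X -> Y -> Z -> M),
    balanced3 ra1 la1 ra2 la2 f -> tsum3 f l1 = tsum3 f l2.

Section Bialgebroid.
Variables (k : comNzRingType) (A U : algType k).
Variables (s t : A -> U) (D : U -> seq (U * U)) (e : U -> A).

(* the four actions: a |> b > u < c <| d := t(c) s(b) u s(d) t(a) *)
(* U_< (x)_A >U : t(a) x (x) y = x (x) s(a) y *)
Definition teqL (l1 l2 : seq (U * U)) : Prop :=
  teq2 (fun x a => t a * x) (fun a y => s a * y) l1 l2.

(* |>U (x)_{A^op} U_< : x t(a) (x) y = x (x) t(a) y *)
Definition teqop (l1 l2 : seq (U * U)) : Prop :=
  teq2 (fun x a => x * t a) (fun a y => t a * y) l1 l2.

(* U_< (x)_A >U_< (x)_A >U *)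
Definition teqL3 (l1 l2 : seq (U * U * U)) : Prop :=
  teq3 (fun x a => t a * x) (fun a y => s a * y)
       (fun y a => t a * y) (fun a z => s a * z) l1 l2.

Definition Dl (l : seq (U * U)) : seq (U * U * U) :=
  flatten [seq [seq (q.1, q.2, p.2) | q <- D p.1] | p <- l].
Definition Dr (l : seq (U * U)) : seq (U * U * U) :=
  flatten [seq [seq (p.1, q.1, q.2) | q <- D p.2] | p <- l].

(* product in the Takeuchi product, on representatives *)
Definition tmul (l1 l2 : seq (U * U)) : seq (U * U) :=
  flatten [seq [seq (p.1 * q.1, p.2 * q.2) | q <- l2] | p <- l1].

Record is_left_bialgebroid : Prop := {
  s_add : forall a b, s (a + b) = s a + s b;
  s_scale : forall (c : k) a, s (c *: a) = c *: s a;
  s_mul : forall a b, s (a * b) = s a * s b;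
  s_one : s 1 = 1;
  t_add : forall a b, t (a + b) = t a + t b;
  t_scale : forall (c : k) a, t (c *: a) = c *: t a;
  t_mul : forall a b, t (a * b) = t b * t a;
  t_one : t 1 = 1;
  st_comm : forall a b, s a * t b = t b * s a;
  D_add : forall u v, teqL (D (u + v)) (D u ++ D v);
  D_scale : forall (c : k) u, teqL (D (c *: u)) [seq (c *: p.1, p.2) | p <- D u];
  D_takeuchi : forall u a,
      teqL [seq (p.1 * t a, p.2) | p <- D u] [seq (p.1, p.2 * s a) | p <- D u];
  D_actions : forall a b c d u,
      teqL (D (t c * s b * u * s d * t a))
           [seq (s b * p.1 * s d, t c * p.2 * t a) | p <- D u];
  D_coass : forall u, teqL3 (Dl (D u)) (Dr (D u));
  D_one : teqL (D 1) [:: (1, 1)];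
  D_mul : forall u v, teqL (D (u * v)) (tmul (D u) (D v));
  e_add : forall u v, e (u + v) = e u + e v;
  e_scale : forall (c : k) u, e (c *: u) = c *: e u;
  e_lin : forall b c u, e (t c * s b * u) = b * e u * c;
  e_bal : forall a u, e (u * t a) = e (u * s a);
  e_mul : forall u v, e (u * v) = e (u * s (e v));
  e_counitl : forall u, \sum_(p <- D u) s (e p.1) * p.2 = u;
  e_counitr : forall u, \sum_(p <- D u) t (e p.2) * p.1 = u
}.

(* Galois map beta : |>U (x)_{A^op} U_< -> U_< (x)_A >U, u (x) v |-> u(1) (x) u(2) v *)
Definition galois_map (l : seq (U * U)) : seq (U * U) :=
  flatten [seq [seq (q.1, q.2 * p.2) | q <- D p.1] | p <- l].

Definition is_left_hopf_algebroid : Prop :=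
  [/\ is_left_bialgebroid,
      (forall l1 l2, teqL (galois_map l1) (galois_map l2) -> teqop l1 l2) &
      (forall m, exists l, teqL (galois_map l) m)].

(* a representative of u_+ (x) u_- := beta^{-1}(u (x) 1) *)
Definition transl (u : U) : seq (U * U) :=
  epsilon (inhabits [::]) (fun l => teqL (galois_map l) [:: (u, 1)]).

Definition hact (u b : U) : U := \sum_(p <- transl u) p.1 * b * p.2.

End Bialgebroid.

Section Morphism.
Variables (k : comNzRingType) (A U V : algType k).
Variables (sU tU : A -> U) (DU : U -> seq (U * U)) (eU : U -> A).
Variables (sV tV : A -> V) (DV : V -> seq (V * V)) (eV : V -> A).
Variable pi : U -> V.

Definition is_bialgebroid_morphism : Prop :=
  [/\ [/\ forall u v, pi (u + v) = pi u + pi v,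
          forall (c : k) u, pi (c *: u) = c *: pi u,
          forall u v, pi (u * v) = pi u * pi v &
          pi 1 = 1],
      forall a, pi (sU a) = sV a,
      forall a, pi (tU a) = tV a,
      forall u, eV (pi u) = eU u &
      forall u, teqL sV tV (DV (pi u)) [seq (pi p.1, pi p.2) | p <- DU u]].

(* left Hopf kernel: u(1) (x)_A pi(u(2)) = u (x)_A 1_V in U_< (x)_A >V *)
Definition left_hopf_kernel (u : U) : Prop :=
  teq2 (fun (x : U) a => tU a * x) (fun a (y : V) => sV a * y)
       [seq (p.1, pi p.2) | p <- DU u] [:: (u, 1)].

End Morphism.

(* With u_+ (x) u_- := beta^-1 (u (x) 1), every identity about the translation map
   is proved by applying the injective Galois map beta to both sides and computing
   with the bialgebroid axioms; this gives Schauenburg's identities for (uv)_+-,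
   u_+(1) (x) u_+(2) (x) u_-, u_+ (x) u_-(1) (x) u_-(2) and u_+ u_- = s(e(u)).
   Applying the counit of V to the kernel condition shows that B commutes with t(A),
   so x (x) y |-> x b y is balanced over A^op and u -> b = u_+ b u_- is well defined;
   the module-algebra axioms then follow from these identities.  B is a subring
   because Delta and pi are multiplicative, and it is stable under the action by the
   identity for u_+ (x) u_-(1) (x) u_-(2). *)

From HB Require Import structures.
From mathcomp Require Import all_boot all_algebra.
From Stdlib Require Import ClassicalEpsilon.
Set Implicit Arguments. Unset Strict Implicit. Unset Printing Implicit Defensive.
Import GRing.Theory.
Local Open Scope ring_scope.

Section AdditiveFun.
Variables (Y M : zmodType) (g : Y -> M).
Hypothesis gD : forall y1 y2, g (y1 + y2) = g y1 + g y2.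

Lemma additive_fun0 : g 0 = 0.
Proof. by apply/(addrI (g 0)); rewrite -gD !addr0. Qed.

Lemma additive_funB y1 y2 : g (y1 - y2) = g y1 - g y2.
Proof.
have gN y : g (- y) = - g y.
  by apply/(addrI (g y)); rewrite -gD !subrr additive_fun0.
by rewrite gD gN.
Qed.

Lemma additive_fun_sum (I : Type) (r : seq I) (F : I -> Y) :
  g (\sum_(i <- r) F i) = \sum_(i <- r) g (F i).
Proof. exact: (big_morph g gD additive_fun0). Qed.

End AdditiveFun.

Section Balanced.
Variables (A : Type) (X Y M : zmodType) (ra : X -> A -> X) (la : A -> Y -> Y).

Section Accessors.
Variable f : X -> Y -> M.
Hypothesis hf : balanced2 ra la f.

Lemma bal_addl x1 x2 y : f (x1 + x2) y = f x1 y + f x2 y.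
Proof. by case: hf. Qed.

Lemma bal_addr x y1 y2 : f x (y1 + y2) = f x y1 + f x y2.
Proof. by case: hf. Qed.

Lemma bal_act x a y : f (ra x a) y = f x (la a y).
Proof. by case: hf. Qed.

End Accessors.

Lemma balanced2_sum (I : Type) (r : seq I) (F : I -> X -> Y -> M) :
  (forall i, balanced2 ra la (F i)) ->
  balanced2 ra la (fun x y => \sum_(i <- r) F i x y).
Proof.
move=> hF; split=> [x y1 y2|x1 x2 y|x a y]; rewrite -?big_split;
  by apply: eq_bigr => i _; rewrite ?(bal_addr (hF i)) ?(bal_addl (hF i)) ?(bal_act (hF i)).
Qed.

End Balanced.

Lemma sum_flatten_map (M : zmodType) (X I J : Type) (F : X -> M) (r : seq I)
    (h : I -> seq J) (G : I -> J -> X) :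
  \sum_(x <- flatten [seq [seq G i j | j <- h i] | i <- r]) F x =
  \sum_(i <- r) \sum_(j <- h i) F (G i j).
Proof. by rewrite big_flatten big_map; apply: eq_bigr => i _; rewrite big_map. Qed.

Section Bialgebroid.
Variables (k : comNzRingType) (A U : algType k).
Variables (s t : A -> U) (D : U -> seq (U * U)) (e : U -> A).
Hypothesis HB : is_left_bialgebroid s t D e.

(* Maps descending to U_< (x)_A >U, to |>U (x)_{A^op} U_< and to
   U_< (x)_A >U_< (x)_A >U respectively. *)
Definition balancedL (M : zmodType) (f : U -> U -> M) :=
  balanced2 (fun x a => t a * x) (fun a y => s a * y) f.
Definition balancedOp (M : zmodType) (f : U -> U -> M) :=
  balanced2 (fun x a => x * t a) (fun a y => t a * y) f.
Definition balancedL3 (M : zmodType) (F : U -> U -> U -> M) :=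
  balanced3 (fun x a => t a * x) (fun a y => s a * y)
            (fun y a => t a * y) (fun a z => s a * z) F.

Section BalancedL.
Variables (M : zmodType) (f : U -> U -> M).
Hypothesis hf : balancedL f.

Lemma balancedL_mulr_snd z : balancedL (fun x y => f x (y * z)).
Proof.
split=> [x y1 y2|x1 x2 y|x a y]; first by rewrite mulrDl (bal_addr hf).
  by rewrite (bal_addl hf).
by rewrite (bal_act hf) mulrA.
Qed.

Lemma balancedL_mulr_fst w : balancedL (fun x y => f (x * w) y).
Proof.
split=> [x y1 y2|x1 x2 y|x a y]; first by rewrite (bal_addr hf).
  by rewrite mulrDl (bal_addl hf).
by rewrite -mulrA (bal_act hf).
Qed.

Lemma balancedL_smul_fst a : balancedL (fun x y => f (s a * x) y).
Proof.
split=> [x y1 y2|x1 x2 y|x c y]; first by rewrite (bal_addr hf).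
  by rewrite mulrDr (bal_addl hf).
by rewrite mulrA (st_comm HB) -mulrA (bal_act hf).
Qed.

Lemma balancedL_tmul_snd a : balancedL (fun x y => f x (t a * y)).
Proof.
split=> [x y1 y2|x1 x2 y|x c y]; first by rewrite mulrDr (bal_addr hf).
  by rewrite (bal_addl hf).
by rewrite (bal_act hf) !mulrA (st_comm HB).
Qed.

Lemma balancedL_scale_fst (c : k) : balancedL (fun x y => f (c *: x) y).
Proof.
split=> [x y1 y2|x1 x2 y|x a y]; first by rewrite (bal_addr hf).
  by rewrite scalerDr (bal_addl hf).
by rewrite scalerAr (bal_act hf).
Qed.

Lemma comul_sumD u v : \sum_(q <- D (u + v)) f q.1 q.2 =
  \sum_(q <- D u) f q.1 q.2 + \sum_(q <- D v) f q.1 q.2.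
Proof. by have := D_add HB u v hf; rewrite /tsum big_cat. Qed.

Lemma comul_sum0 : \sum_(q <- D 0) f q.1 q.2 = 0.
Proof.
by apply/(addrI (\sum_(q <- D 0) f q.1 q.2)); rewrite -comul_sumD !addr0.
Qed.

Lemma comul_sumB u v : \sum_(q <- D (u - v)) f q.1 q.2 =
  \sum_(q <- D u) f q.1 q.2 - \sum_(q <- D v) f q.1 q.2.
Proof. by have := comul_sumD (u - v) v; rewrite subrK => ->; rewrite addrK. Qed.

Lemma comul_sum_big (I : Type) (r : seq I) (F : I -> U) :
  \sum_(q <- D (\sum_(i <- r) F i)) f q.1 q.2 =
  \sum_(i <- r) \sum_(q <- D (F i)) f q.1 q.2.
Proof.
elim: r => [|i r IH]; first by rewrite !big_nil comul_sum0.
by rewrite !big_cons comul_sumD IH.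
Qed.

Lemma comul_sumZ (c : k) u :
  \sum_(q <- D (c *: u)) f q.1 q.2 = \sum_(q <- D u) f (c *: q.1) q.2.
Proof. by have := D_scale HB c u hf; rewrite /tsum big_map. Qed.

Lemma comul_sum_actions a b c d u :
  \sum_(q <- D (t c * s b * u * s d * t a)) f q.1 q.2 =
  \sum_(q <- D u) f (s b * q.1 * s d) (t c * q.2 * t a).
Proof. by have := D_actions HB a b c d u hf; rewrite /tsum big_map. Qed.

Local Ltac actions_at a b c d u :=
  have := comul_sum_actions a b c d u;
  rewrite (s_one HB) (t_one HB) ?mulr1 ?mul1r => ->;
  by apply: eq_bigr => q _; rewrite ?mulr1 ?mul1r.

Lemma comul_sum_sl a u :
  \sum_(q <- D (s a * u)) f q.1 q.2 = \sum_(q <- D u) f (s a * q.1) q.2.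
Proof. actions_at (1 : A) a (1 : A) (1 : A) u. Qed.

Lemma comul_sum_sr a u :
  \sum_(q <- D (u * s a)) f q.1 q.2 = \sum_(q <- D u) f (q.1 * s a) q.2.
Proof. actions_at (1 : A) (1 : A) (1 : A) a u. Qed.

Lemma comul_sum_tl a u :
  \sum_(q <- D (t a * u)) f q.1 q.2 = \sum_(q <- D u) f q.1 (t a * q.2).
Proof. actions_at (1 : A) (1 : A) a (1 : A) u. Qed.

Lemma comul_sum_tr a u :
  \sum_(q <- D (u * t a)) f q.1 q.2 = \sum_(q <- D u) f q.1 (q.2 * t a).
Proof. actions_at a (1 : A) (1 : A) (1 : A) u. Qed.

Lemma comul_sum_takeuchi a u :
  \sum_(q <- D u) f (q.1 * t a) q.2 = \sum_(q <- D u) f q.1 (q.2 * s a).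
Proof. by have := D_takeuchi HB u a hf; rewrite /tsum !big_map. Qed.

Lemma comul_sumM u v : \sum_(q <- D (u * v)) f q.1 q.2 =
  \sum_(p <- D u) \sum_(q <- D v) f (p.1 * q.1) (p.2 * q.2).
Proof. by have := D_mul HB u v hf; rewrite /tsum /tmul sum_flatten_map. Qed.

Lemma comul_sum1 : \sum_(q <- D 1) f q.1 q.2 = f 1 1.
Proof. by have := D_one HB hf; rewrite /tsum big_seq1. Qed.

End BalancedL.

Lemma comul_coassoc (M : zmodType) (F : U -> U -> U -> M) u : balancedL3 F ->
  \sum_(p <- D u) \sum_(q <- D p.1) F q.1 q.2 p.2 =
  \sum_(p <- D u) \sum_(q <- D p.2) F p.1 q.1 q.2.
Proof. by move=> hF; have := D_coass HB u hF; rewrite /tsum3 /Dl /Dr !sum_flatten_map. Qed.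

Lemma balancedL_scounit : balancedL (fun x y => s (e x) * y).
Proof.
split=> [x y1 y2|x1 x2 y|x a y]; first by rewrite mulrDr.
  by rewrite (e_add HB) (s_add HB) mulrDl.
have := e_lin HB 1 a x; rewrite (s_one HB) mulr1 mul1r => ->.
by rewrite (s_mul HB) mulrA.
Qed.

Lemma balancedL_tcounit : balancedL (fun x y => t (e y) * x).
Proof.
split=> [x y1 y2|x1 x2 y|x a y]; first by rewrite (e_add HB) (t_add HB) mulrDl.
  by rewrite mulrDr.
have := e_lin HB a 1 y; rewrite (t_one HB) mul1r mulr1 => ->.
by rewrite (t_mul HB) mulrA.
Qed.

Lemma t_counit1 : t (e 1) = 1.
Proof. by have := e_counitr HB 1; rewrite (comul_sum1 balancedL_tcounit) mulr1. Qed.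

End Bialgebroid.

Section Translation.
Variables (k : comNzRingType) (A U : algType k).
Variables (s t : A -> U) (D : U -> seq (U * U)) (e : U -> A).
Hypothesis HB : is_left_bialgebroid s t D e.
Hypothesis Hinj :
  forall l1 l2, teqL s t (galois_map D l1) (galois_map D l2) -> teqop t l1 l2.
Hypothesis Hsurj : forall m, exists l, teqL s t (galois_map D l) m.

Local Notation T := (transl s t D).
Local Notation balancedL := (balancedL s t).
Local Notation balancedOp := (balancedOp t).
Local Notation balancedL3 := (balancedL3 s t).

Lemma translP u : teqL s t (galois_map D (T u)) [:: (u, 1)].
Proof. exact: (epsilon_spec _ (fun l => teqL s t (galois_map D l) [:: (u, 1)]) (Hsurj _)). Qed.

Lemma tsum_galois_map (M : zmodType) (f : U -> U -> M) l :
  tsum f (galois_map D l) = \sum_(p <- l) \sum_(q <- D p.1) f q.1 (q.2 * p.2).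
Proof. by rewrite /tsum /galois_map sum_flatten_map. Qed.

Lemma galois_transl (M : zmodType) (f : U -> U -> M) u : balancedL f ->
  \sum_(p <- T u) \sum_(q <- D p.1) f q.1 (q.2 * p.2) = f u 1.
Proof.
by move=> hf; have := translP u hf; rewrite tsum_galois_map /tsum big_seq1.
Qed.

Lemma galois_translr (M : zmodType) (f : U -> U -> M) u z : balancedL f ->
  \sum_(p <- T u) \sum_(q <- D p.1) f q.1 (q.2 * (p.2 * z)) = f u z.
Proof.
move=> hf; have := galois_transl u (balancedL_mulr_snd hf z); rewrite mul1r => <-.
by apply: eq_bigr => p _; apply: eq_bigr => q _; rewrite mulrA.
Qed.

Lemma galois_inj_sum l1 l2 :
  (forall (M : zmodType) (f : U -> U -> M), balancedL f ->
    \sum_(p <- l1) \sum_(q <- D p.1) f q.1 (q.2 * p.2) =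
    \sum_(p <- l2) \sum_(q <- D p.1) f q.1 (q.2 * p.2)) ->
  forall (M : zmodType) (g : U -> U -> M), balancedOp g ->
    \sum_(p <- l1) g p.1 p.2 = \sum_(p <- l2) g p.1 p.2.
Proof. by move=> h M g hg; apply: (Hinj _ hg) => M' f hf; rewrite !tsum_galois_map h. Qed.

Lemma transl_uniq u l :
  (forall (M : zmodType) (f : U -> U -> M), balancedL f ->
    \sum_(p <- l) \sum_(q <- D p.1) f q.1 (q.2 * p.2) = f u 1) ->
  forall (M : zmodType) (g : U -> U -> M), balancedOp g ->
    \sum_(p <- T u) g p.1 p.2 = \sum_(p <- l) g p.1 p.2.
Proof. by move=> h; apply: galois_inj_sum => M f hf; rewrite galois_transl // h. Qed.

Section BalancedOp.
Variables (M : zmodType) (g : U -> U -> M).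
Hypothesis hg : balancedOp g.

Lemma transl_comul_cancel y z :
  \sum_(r <- D y) \sum_(p <- T r.1) g p.1 (p.2 * (r.2 * z)) = g y z.
Proof.
have := galois_inj_sum
  (l1 := flatten [seq [seq (p.1, p.2 * (r.2 * z)) | p <- T r.1] | r <- D y])
  (l2 := [:: (y, z)]) _ hg.
rewrite sum_flatten_map big_seq1 => -> // M' f hf; rewrite sum_flatten_map big_seq1.
by apply: eq_bigr => r _; apply: galois_translr.
Qed.

Lemma translD x y : \sum_(p <- T (x + y)) g p.1 p.2 =
  \sum_(p <- T x) g p.1 p.2 + \sum_(p <- T y) g p.1 p.2.
Proof.
rewrite -big_cat; apply: transl_uniq hg => M' f hf.
by rewrite big_cat !galois_transl // (bal_addl hf).
Qed.

Lemma translZ (c : k) x :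
  \sum_(p <- T (c *: x)) g p.1 p.2 = \sum_(p <- T x) g (c *: p.1) p.2.
Proof.
rewrite -(big_map (fun p => (c *: p.1, p.2)) predT (fun p => g p.1 p.2)).
apply: transl_uniq hg => M' f hf; rewrite big_map.
rewrite -(galois_transl x (balancedL_scale_fst hf c)).
by apply: eq_bigr => p _; rewrite (comul_sumZ HB (balancedL_mulr_snd hf p.2)).
Qed.

Lemma transl_sl a x :
  \sum_(p <- T (s a * x)) g p.1 p.2 = \sum_(p <- T x) g (s a * p.1) p.2.
Proof.
rewrite -(big_map (fun p => (s a * p.1, p.2)) predT (fun p => g p.1 p.2)).
apply: transl_uniq hg => M' f hf; rewrite big_map.
rewrite -(galois_transl x (balancedL_smul_fst HB hf a)).
by apply: eq_bigr => p _; rewrite (comul_sum_sl HB (balancedL_mulr_snd hf p.2)).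
Qed.

Lemma transl_sr a x :
  \sum_(p <- T (x * s a)) g p.1 p.2 = \sum_(p <- T x) g (p.1 * s a) p.2.
Proof.
rewrite -(big_map (fun p => (p.1 * s a, p.2)) predT (fun p => g p.1 p.2)).
apply: transl_uniq hg => M' f hf; rewrite big_map.
rewrite -(galois_transl x (balancedL_mulr_fst hf (s a))).
by apply: eq_bigr => p _; rewrite (comul_sum_sr HB (balancedL_mulr_snd hf p.2)).
Qed.

Lemma transl_tl a x :
  \sum_(p <- T (t a * x)) g p.1 p.2 = \sum_(p <- T x) g p.1 (p.2 * s a).
Proof.
rewrite -(big_map (fun p => (p.1, p.2 * s a)) predT (fun p => g p.1 p.2)).
apply: transl_uniq hg => M' f hf; rewrite big_map /=.
by rewrite (bal_act hf) mulr1 -(galois_translr _ _ hf).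
Qed.

Lemma transl_tr a x :
  \sum_(p <- T (x * t a)) g p.1 p.2 = \sum_(p <- T x) g p.1 (s a * p.2).
Proof.
rewrite -(big_map (fun p => (p.1, s a * p.2)) predT (fun p => g p.1 p.2)).
apply: transl_uniq hg => M' f hf; rewrite big_map.
rewrite -(galois_transl x (balancedL_mulr_fst hf (t a))).
apply: eq_bigr => p _; rewrite (comul_sum_takeuchi HB (balancedL_mulr_snd hf p.2)).
by apply: eq_bigr => q _; rewrite mulrA.
Qed.

Lemma transl_takeuchi a x :
  \sum_(p <- T x) g p.1 (p.2 * t a) = \sum_(p <- T x) g (t a * p.1) p.2.
Proof.
have := galois_inj_sum (l1 := [seq (p.1, p.2 * t a) | p <- T x])
  (l2 := [seq (t a * p.1, p.2) | p <- T x]) _ hg.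
rewrite !big_map => -> // M' f hf; rewrite !big_map galois_translr //.
have := galois_transl x (balancedL_tmul_snd HB hf a); rewrite mulr1 => <-.
apply: eq_bigr => p _; rewrite (comul_sum_tl HB (balancedL_mulr_snd hf p.2)).
by apply: eq_bigr => q _; rewrite mulrA.
Qed.

Lemma transl1 : \sum_(p <- T 1) g p.1 p.2 = g 1 1.
Proof.
have := transl_uniq (l := [:: (1, 1)]) _ hg; rewrite big_seq1 => -> // M' f hf.
by rewrite big_seq1 (comul_sum1 HB (balancedL_mulr_snd hf 1)) mulr1.
Qed.

Lemma translM x y : \sum_(p <- T (x * y)) g p.1 p.2 =
  \sum_(p <- T x) \sum_(q <- T y) g (p.1 * q.1) (q.2 * p.2).
Proof.
have := transl_uniq
  (l := flatten [seq [seq (p.1 * q.1, q.2 * p.2) | q <- T y] | p <- T x]) _ hg.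
rewrite sum_flatten_map => -> // M' f hf; rewrite sum_flatten_map /=; symmetry.
pose Phi (p : U * U) x' y' := \sum_(r <- D p.1) f (r.1 * x') (r.2 * (y' * p.2)).
have hPhi p : balancedL (Phi p).
  split=> [x' y1 y2|x1 x2 y'|x' a y']; rewrite /Phi -?big_split.
  - by apply: eq_bigr => r _; rewrite mulrDl mulrDr (bal_addr hf).
  - by apply: eq_bigr => r _; rewrite mulrDr (bal_addl hf).
  transitivity (\sum_(r <- D p.1) f (r.1 * t a * x') (r.2 * (y' * p.2))).
    by apply: eq_bigr => r _; rewrite mulrA.
  rewrite (comul_sum_takeuchi HB (balancedL_mulr_snd (balancedL_mulr_fst hf x') (y' * p.2))).
  by apply: eq_bigr => r _; rewrite !mulrA.
transitivity (\sum_(p <- T x) Phi p y 1).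
  rewrite /Phi -(galois_transl x (balancedL_mulr_fst hf y)).
  by apply: eq_bigr => p _; apply: eq_bigr => r _; rewrite mul1r.
apply: eq_bigr => p _; rewrite -(galois_transl y (hPhi p)).
apply: eq_bigr => q _.
transitivity (\sum_(c <- D q.1) \sum_(r <- D p.1) f (r.1 * c.1) (r.2 * (c.2 * q.2 * p.2))).
  by apply: eq_bigr => c _; apply: eq_bigr => r _; rewrite mulrA.
rewrite (comul_sumM HB (balancedL_mulr_snd hf (q.2 * p.2))) /= exchange_big /=.
by apply: eq_bigr => r _; apply: eq_bigr => c _; rewrite !mulrA.
Qed.

End BalancedOp.

Lemma transl_counit x : \sum_(p <- T x) p.1 * p.2 = s (e x).
Proof.
have := galois_transl x (balancedL_scounit HB); rewrite mulr1 => <-.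
apply: eq_bigr => p _; rewrite -{1}(e_counitl HB p.1) mulr_suml.
by apply: eq_bigr => q _; rewrite mulrA.
Qed.

Section TrilinearSums.
Variables (M : zmodType) (F : U -> U -> U -> M).
Hypothesis F1 : forall x1 x2 y z, F (x1 + x2) y z = F x1 y z + F x2 y z.
Hypothesis F2 : forall x y1 y2 z, F x (y1 + y2) z = F x y1 z + F x y2 z.
Hypothesis F3 : forall x y z1 z2, F x y (z1 + z2) = F x y z1 + F x y z2.

Section ComulPlus.
Hypothesis Fst : forall a x y z, F (t a * x) y z = F x (s a * y) z.
Hypothesis Ftt : forall a x y z, F x (y * t a) z = F x y (t a * z).

Let Fmid x y z := \sum_(p <- T y) F x p.1 (p.2 * z).

Lemma Fmid_comul x y z : F x y z = \sum_(c <- D y) Fmid x c.1 (c.2 * z).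
Proof.
have hg : balancedOp (F x).
  by split=> [y' z1 z2|y1 y2 z'|y' a z']; [apply: F3|apply: F2|apply: Ftt].
by rewrite -(transl_comul_cancel hg y z).
Qed.

Let F_balancedOp x z : balancedOp (fun a b => F x a (b * z)).
Proof.
split=> [y z1 z2|y1 y2 z'|y a z']; first by rewrite mulrDl F3.
  by rewrite F2.
by rewrite Ftt mulrA.
Qed.

Lemma FmidD1 x1 x2 y z : Fmid (x1 + x2) y z = Fmid x1 y z + Fmid x2 y z.
Proof. by rewrite /Fmid -big_split; apply: eq_bigr => p _; rewrite F1. Qed.

Lemma FmidD2 x y1 y2 z : Fmid x (y1 + y2) z = Fmid x y1 z + Fmid x y2 z.
Proof. by rewrite /Fmid (translD (F_balancedOp x z)). Qed.

Lemma FmidD3 x y z1 z2 : Fmid x y (z1 + z2) = Fmid x y z1 + Fmid x y z2.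
Proof. by rewrite /Fmid -big_split; apply: eq_bigr => p _; rewrite mulrDr F3. Qed.

Lemma Fmid_ts a x y z : Fmid (t a * x) y z = Fmid x (s a * y) z.
Proof.
rewrite /Fmid (transl_sl (F_balancedOp x z)).
by apply: eq_bigr => p _; rewrite Fst.
Qed.

Lemma Fmid_tt a x y z : Fmid x (t a * y) z = Fmid x y (s a * z).
Proof.
rewrite /Fmid (transl_tl (F_balancedOp x z)).
by apply: eq_bigr => p _; rewrite mulrA.
Qed.

Lemma transl_comul_plus u :
  \sum_(w <- T u) \sum_(c <- D w.1) F c.1 c.2 w.2 =
  \sum_(r <- D u) \sum_(q <- T r.2) F r.1 q.1 q.2.
Proof.
have hFmid z : balancedL (fun a b => Fmid a b z).
  by split=> [x y1 y2|x1 x2 y'|x a y']; rewrite ?FmidD2 ?FmidD1 ?Fmid_ts.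
have hcoass w : balancedL3 (fun a b c => Fmid a b (c * w)).
  split=> [x1 x2 y z|x y1 y2 z|x y z1 z2|x a y z|x y a z].
  - exact: FmidD1.
  - exact: FmidD2.
  - by rewrite mulrDl FmidD3.
  - exact: Fmid_ts.
  - by rewrite Fmid_tt mulrA.
pose Phi x y := \sum_(d <- D x) Fmid d.1 d.2 y.
have hPhi : balancedL Phi.
  split=> [x y1 y2|x1 x2 y|x a y]; rewrite /Phi.
  - by rewrite -big_split; apply: eq_bigr => d _; rewrite FmidD3.
  - exact: (comul_sumD HB (hFmid y)).
  by rewrite (comul_sum_tl HB (hFmid y)); apply: eq_bigr => d _; rewrite Fmid_tt.
transitivity (\sum_(w <- T u) \sum_(c <- D w.1) Phi c.1 (c.2 * w.2)).
  apply: eq_bigr => w _.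
  transitivity (\sum_(c <- D w.1) \sum_(d <- D c.2) Fmid c.1 d.1 (d.2 * w.2)).
    by apply: eq_bigr => c _; rewrite Fmid_comul.
  by rewrite -(comul_coassoc HB _ (hcoass w.2)).
rewrite (galois_transl u hPhi) /Phi; apply: eq_bigr => d _.
by rewrite /Fmid; under eq_bigr do rewrite mulr1.
Qed.

End ComulPlus.

Section ComulMinus.
Hypothesis Ftt : forall a x y z, F (x * t a) y z = F x y (t a * z).
Hypothesis Fts : forall a x y z, F x (t a * y) z = F x y (s a * z).

Let Ffst x y z := \sum_(p <- T x) F p.1 y (p.2 * z).

Let F_balancedOp y z : balancedOp (fun a b => F a y (b * z)).
Proof.
split=> [x z1 z2|x1 x2 z'|x a z']; first by rewrite mulrDl F3.
  by rewrite F1.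
by rewrite Ftt mulrA.
Qed.

Lemma Ffst_comul x y z : F x y z = \sum_(r <- D x) Ffst r.1 y (r.2 * z).
Proof.
have hg : balancedOp (fun a b => F a y b).
  by split=> [x' z1 z2|x1 x2 z'|x' a z']; [apply: F3|apply: F1|apply: Ftt].
by rewrite -(transl_comul_cancel hg x z).
Qed.

Lemma FfstD1 x1 x2 y z : Ffst (x1 + x2) y z = Ffst x1 y z + Ffst x2 y z.
Proof. by rewrite /Ffst (translD (F_balancedOp y z)). Qed.

Lemma FfstD2 x y1 y2 z : Ffst x (y1 + y2) z = Ffst x y1 z + Ffst x y2 z.
Proof. by rewrite /Ffst -big_split; apply: eq_bigr => p _; rewrite F2. Qed.

Lemma FfstD3 x y z1 z2 : Ffst x y (z1 + z2) = Ffst x y z1 + Ffst x y z2.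
Proof. by rewrite /Ffst -big_split; apply: eq_bigr => p _; rewrite mulrDr F3. Qed.

Lemma Ffst_ts a x y z : Ffst (t a * x) y z = Ffst x y (s a * z).
Proof.
rewrite /Ffst (transl_tl (F_balancedOp y z)).
by apply: eq_bigr => p _; rewrite mulrA.
Qed.

Lemma Ffst_tt a x y z : Ffst (x * t a) y z = Ffst x (t a * y) z.
Proof.
rewrite /Ffst (transl_tr (F_balancedOp y z)).
by apply: eq_bigr => p _; rewrite Fts mulrA.
Qed.

Let Ffst_balancedOp y z : balancedOp (fun a b => Ffst a (b * y) z).
Proof.
split=> [x z1 z2|x1 x2 z'|x a z']; first by rewrite mulrDl FfstD2.
  by rewrite FfstD1.
by rewrite Ffst_tt mulrA.
Qed.

Let Fnest x y z := \sum_(p <- T x) Ffst p.1 (p.2 * y) z.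

Lemma Fnest_comul x y z : \sum_(c <- D x) Fnest c.1 (c.2 * y) z = Ffst x y z.
Proof.
have hg : balancedOp (fun a b => Ffst a b z).
  by split=> [x' z1 z2|x1 x2 z'|x' a z']; rewrite ?FfstD2 ?FfstD1 ?Ffst_tt.
by rewrite -(transl_comul_cancel hg x y).
Qed.

Lemma FnestD1 x1 x2 y z : Fnest (x1 + x2) y z = Fnest x1 y z + Fnest x2 y z.
Proof. by rewrite /Fnest (translD (Ffst_balancedOp y z)). Qed.

Lemma FnestD2 x y1 y2 z : Fnest x (y1 + y2) z = Fnest x y1 z + Fnest x y2 z.
Proof. by rewrite /Fnest -big_split; apply: eq_bigr => p _; rewrite mulrDr FfstD2. Qed.

Lemma FnestD3 x y z1 z2 : Fnest x y (z1 + z2) = Fnest x y z1 + Fnest x y z2.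
Proof. by rewrite /Fnest -big_split; apply: eq_bigr => p _; rewrite FfstD3. Qed.

Lemma Fnest_ts a x y z : Fnest (t a * x) y z = Fnest x (s a * y) z.
Proof.
rewrite /Fnest (transl_tl (Ffst_balancedOp y z)).
by apply: eq_bigr => p _; rewrite mulrA.
Qed.

Lemma Fnest_tt a x y z : Fnest x (t a * y) z = Fnest x y (s a * z).
Proof.
rewrite /Fnest; under eq_bigr do rewrite mulrA.
rewrite (transl_takeuchi (Ffst_balancedOp y z)).
by apply: eq_bigr => p _; rewrite Ffst_ts.
Qed.

Lemma transl_comul_minus u :
  \sum_(w <- T u) \sum_(q <- D w.2) F w.1 q.1 q.2 =
  \sum_(w <- T u) \sum_(p <- T w.1) F p.1 w.2 p.2.
Proof.
have hFnest x : balancedL (Fnest x).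
  by split=> [y z1 z2|y1 y2 z|y a z]; rewrite ?FnestD3 ?FnestD2 ?Fnest_tt.
have hcoass w : balancedL3 (fun a b c => \sum_(q <- D w) Fnest a (b * q.1) (c * q.2)).
  split=> [x1 x2 y z|x y1 y2 z|x y z1 z2|x a y z|x y a z];
    rewrite -?big_split; apply: eq_bigr => q _.
  - exact: FnestD1.
  - by rewrite mulrDl FnestD2.
  - by rewrite mulrDl FnestD3.
  - by rewrite Fnest_ts mulrA.
  - by rewrite -mulrA Fnest_tt mulrA.
pose Phi x y := \sum_(d <- D y) Fnest x d.1 d.2.
have hPhi : balancedL Phi.
  split=> [x y1 y2|x1 x2 y|x a y]; rewrite /Phi.
  - exact: (comul_sumD HB (hFnest x)).
  - by rewrite -big_split; apply: eq_bigr => d _; rewrite FnestD1.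
  by rewrite (comul_sum_sl HB (hFnest x)); apply: eq_bigr => d _; rewrite Fnest_ts.
transitivity (\sum_(w <- T u) \sum_(r <- D w.1) Phi r.1 (r.2 * w.2)); last first.
  rewrite (galois_transl u hPhi) /Phi (comul_sum1 HB (hFnest u)) /Fnest.
  by apply: eq_bigr => w _; rewrite /Ffst mulr1; under eq_bigr do rewrite mulr1.
apply: eq_bigr => w _.
transitivity (\sum_(r <- D w.1) \sum_(c <- D r.1)
    \sum_(q <- D w.2) Fnest c.1 (c.2 * q.1) (r.2 * q.2)).
  transitivity (\sum_(q <- D w.2) \sum_(r <- D w.1) \sum_(c <- D r.1)
      Fnest c.1 (c.2 * q.1) (r.2 * q.2)).
    apply: eq_bigr => q _; rewrite Ffst_comul.
    by apply: eq_bigr => r _; rewrite Fnest_comul.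
  by rewrite exchange_big /=; apply: eq_bigr => r _; rewrite exchange_big.
rewrite (comul_coassoc HB _ (hcoass w.2)); apply: eq_bigr => r _.
by rewrite /Phi (comul_sumM HB (hFnest r.1)).
Qed.

End ComulMinus.
End TrilinearSums.

Local Notation hact := (hact s t D).

Lemma hactDr u b b' : hact u (b + b') = hact u b + hact u b'.
Proof. by rewrite /hact -big_split; apply: eq_bigr => p _; rewrite mulrDr mulrDl. Qed.

Lemma hact_unit u : hact u 1 = s (e u).
Proof. by rewrite /hact -transl_counit; apply: eq_bigr => p _; rewrite mulr1. Qed.

Section CentralAction.
Variable b : U.
Hypothesis bt : forall a, t a * b = b * t a.

Lemma balancedOp_sandwich : balancedOp (fun x y => x * b * y).
Proof.
split=> [x y1 y2|x1 x2 y|x a y]; first by rewrite mulrDr.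
  by rewrite !mulrDl.
by rewrite -(mulrA x) bt !mulrA.
Qed.

Lemma hact_wd u l1 l2 :
  teqL s t (galois_map D l1) [:: (u, 1)] ->
  teqL s t (galois_map D l2) [:: (u, 1)] ->
  \sum_(p <- l1) p.1 * b * p.2 = \sum_(p <- l2) p.1 * b * p.2.
Proof.
move=> h1 h2; apply: (galois_inj_sum _ balancedOp_sandwich) => M f hf.
by rewrite -!tsum_galois_map (h1 M f hf) (h2 M f hf).
Qed.

Lemma hactDl u v : hact (u + v) b = hact u b + hact v b.
Proof. by rewrite /hact (translD balancedOp_sandwich). Qed.

Lemma hactZl (c : k) u : hact (c *: u) b = c *: hact u b.
Proof.
rewrite /hact (translZ balancedOp_sandwich) scaler_sumr.
by apply: eq_bigr => p _; rewrite !scalerAl.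
Qed.

Lemma hact1l : hact 1 b = b.
Proof. by rewrite /hact (transl1 balancedOp_sandwich) mul1r mulr1. Qed.

Lemma hactMl u v : hact (u * v) b = hact u (hact v b).
Proof.
rewrite /hact (translM balancedOp_sandwich); apply: eq_bigr => p _.
by rewrite mulr_sumr mulr_suml; apply: eq_bigr => q _; rewrite !mulrA.
Qed.

Lemma hact_sr u a : hact (u * s a) b = hact u (s a * b).
Proof.
rewrite /hact (transl_sr balancedOp_sandwich).
by apply: eq_bigr => p _; rewrite !mulrA.
Qed.

Lemma hact_tr u a : hact (u * t a) b = hact u (b * s a).
Proof.
rewrite /hact (transl_tr balancedOp_sandwich).
by apply: eq_bigr => p _; rewrite !mulrA.
Qed.

Lemma comul_sum_hact (M : zmodType) (f : U -> U -> M) u : balancedL f ->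
  \sum_(r <- D u) f r.1 (hact r.2 b) =
  \sum_(w <- T u) \sum_(c <- D w.1) f c.1 (c.2 * b * w.2).
Proof.
move=> hf; rewrite (transl_comul_plus (F := fun x y z => f x (y * b * z))) /=.
- apply: eq_bigr => r _; rewrite /hact (additive_fun_sum (g := f r.1)) //.
  by move=> y1 y2; rewrite (bal_addr hf).
- by move=> *; rewrite (bal_addl hf).
- by move=> *; rewrite !mulrDl (bal_addr hf).
- by move=> *; rewrite !mulrDr (bal_addr hf).
- by move=> *; rewrite (bal_act hf) !mulrA.
- by move=> a x y z; rewrite -(mulrA y) bt !mulrA.
Qed.

End CentralAction.

Lemma hactM u b b' : (forall a, t a * b = b * t a) -> (forall a, t a * b' = b' * t a) ->
  hact u (b * b') = \sum_(r <- D u) hact r.1 b * hact r.2 b'.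
Proof.
move=> bt b't.
pose l1 := flatten [seq [seq (p.1, p.2 * hact r.2 b') | p <- T r.1] | r <- D u].
pose l2 := [seq (w.1, b' * w.2) | w <- T u].
have galois_l12 (M : zmodType) (f : U -> U -> M) : balancedL f ->
    \sum_(p <- l1) \sum_(q <- D p.1) f q.1 (q.2 * p.2) =
    \sum_(p <- l2) \sum_(q <- D p.1) f q.1 (q.2 * p.2).
  move=> hf; rewrite sum_flatten_map big_map /=.
  transitivity (\sum_(r <- D u) f r.1 (hact r.2 b')).
    by apply: eq_bigr => r _; rewrite galois_translr.
  rewrite (comul_sum_hact b't _ hf).
  by apply: eq_bigr => w _; apply: eq_bigr => c _; rewrite !mulrA.
have := galois_inj_sum galois_l12 (balancedOp_sandwich bt).
rewrite sum_flatten_map big_map /= => h.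
transitivity (\sum_(w <- T u) w.1 * b * (b' * w.2)).
  by rewrite /hact; apply: eq_bigr => w _; rewrite !mulrA.
rewrite -h; apply: eq_bigr => r _; rewrite /hact mulr_suml.
by apply: eq_bigr => p _; rewrite !mulrA.
Qed.

End Translation.

Section HopfKernel.
Variables (k : comNzRingType) (A U V : algType k).
Variables (sU tU : A -> U) (DU : U -> seq (U * U)) (eU : U -> A).
Variables (sV tV : A -> V) (DV : V -> seq (V * V)) (eV : V -> A).
Variable pi : U -> V.
Hypothesis HBU : is_left_bialgebroid sU tU DU eU.
Hypothesis HinjU :
  forall l1 l2, teqL sU tU (galois_map DU l1) (galois_map DU l2) -> teqop tU l1 l2.
Hypothesis HsurjU : forall m, exists l, teqL sU tU (galois_map DU l) m.
Hypothesis HBV : is_left_bialgebroid sV tV DV eV.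
Hypothesis pi_add : forall u v, pi (u + v) = pi u + pi v.
Hypothesis pi_mul : forall u v, pi (u * v) = pi u * pi v.
Hypothesis pi_one : pi 1 = 1.
Hypothesis pi_s : forall a, pi (sU a) = sV a.
Hypothesis pi_e : forall u, eV (pi u) = eU u.

Local Notation B := (left_hopf_kernel tU DU sV pi).
Local Notation balancedL := (balancedL sU tU).

Definition balancedK (M : zmodType) (f : U -> V -> M) :=
  balanced2 (fun x a => tU a * x) (fun a y => sV a * y) f.

Lemma balancedK_pi (M : zmodType) (f : U -> V -> M) :
  balancedK f -> balancedL (fun x y => f x (pi y)).
Proof.
move=> hf; split=> [x y1 y2|x1 x2 y|x a y]; first by rewrite pi_add (bal_addr hf).
  by rewrite (bal_addl hf).
by rewrite (bal_act hf) pi_mul pi_s.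
Qed.

Lemma kernel_sum b : B b -> forall (M : zmodType) (f : U -> V -> M), balancedK f ->
  \sum_(q <- DU b) f q.1 (pi q.2) = f b 1.
Proof. by move=> hb M f hf; have := hb M f hf; rewrite /tsum big_map big_seq1. Qed.

Lemma kernel_of_sum b : (forall (M : zmodType) (f : U -> V -> M), balancedK f ->
  \sum_(q <- DU b) f q.1 (pi q.2) = f b 1) -> B b.
Proof. by move=> h M f hf; rewrite /tsum big_map big_seq1; apply: h. Qed.

(* Apply x (x) y |-> t(eV(y sV(a))) x to the kernel condition; by the counit axioms
   the two sides become b t(a) and t(a) b. *)
Lemma kernel_tcomm b a : B b -> tU a * b = b * tU a.
Proof.
move=> hb.
pose phi (x : U) (y : V) := tU (eV (y * sV a)) * x.
have hphi : balancedK phi.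
  split=> [x y1 y2|x1 x2 y|x c y]; rewrite /phi.
  - by rewrite mulrDl (e_add HBV) (t_add HBU) mulrDl.
  - by rewrite mulrDr.
  have := e_lin HBV c 1 (y * sV a); rewrite (t_one HBV) mul1r mulr1 !mulrA => ->.
  by rewrite (t_mul HBU).
have := kernel_sum hb hphi; rewrite /phi mul1r -pi_s pi_e.
have := e_lin HBU a 1 1; rewrite (t_one HBU) mul1r !mulr1 => ->.
rewrite (t_mul HBU) (t_counit1 HBU) mul1r => <-.
rewrite -{1}(e_counitr HBU (b * tU a)) (comul_sum_tr HBU (balancedL_tcounit HBU)).
by apply: eq_bigr => q _; rewrite (e_bal HBU) -pi_mul pi_e.
Qed.

Lemma kernel0 : B 0.
Proof.
apply: kernel_of_sum => M f hf; rewrite (comul_sum0 HBU (balancedK_pi hf)).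
by rewrite (additive_fun0 (g := fun x => f x 1)) // => x1 x2; rewrite (bal_addl hf).
Qed.

Lemma kernel1 : B 1.
Proof. by apply: kernel_of_sum => M f hf; rewrite (comul_sum1 HBU (balancedK_pi hf)) pi_one. Qed.

Lemma kernelB b b' : B b -> B b' -> B (b - b').
Proof.
move=> hb hb'; apply: kernel_of_sum => M f hf.
rewrite (comul_sumB HBU (balancedK_pi hf)) (kernel_sum hb hf) (kernel_sum hb' hf).
by rewrite (additive_funB (g := fun x => f x 1)) // => x1 x2; rewrite (bal_addl hf).
Qed.

Lemma kernelM b b' : B b -> B b' -> B (b * b').
Proof.
move=> hb hb'; apply: kernel_of_sum => M f hf.
rewrite (comul_sumM HBU (balancedK_pi hf)) /=.
pose g x y := \sum_(q <- DU b') f (x * q.1) (y * pi q.2).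
have hg : balancedK g.
  apply: balanced2_sum => q; split=> [x y1 y2|x1 x2 y|x a y].
  - by rewrite mulrDl (bal_addr hf).
  - by rewrite mulrDl (bal_addl hf).
  - by rewrite -mulrA (bal_act hf) mulrA.
transitivity (\sum_(p <- DU b) g p.1 (pi p.2)).
  by apply: eq_bigr => p _; apply: eq_bigr => q _; rewrite pi_mul.
have hbf : balancedK (fun x y => f (b * x) y).
  split=> [x y1 y2|x1 x2 y|x a y]; first by rewrite (bal_addr hf).
    by rewrite mulrDr (bal_addl hf).
  by rewrite mulrA -(kernel_tcomm a hb) -mulrA (bal_act hf).
rewrite (kernel_sum hb hg) /g -(kernel_sum hb' hbf).
by apply: eq_bigr => q _; rewrite mul1r.
Qed.

Lemma kernel_s a : B (sU a).
Proof.
apply: kernel_of_sum => M f hf.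
rewrite -[sU a]mulr1 (comul_sum_sl HBU (balancedK_pi hf)).
by rewrite (comul_sum1 HBU (balancedL_smul_fst HBU (balancedK_pi hf) a)) pi_one.
Qed.

Lemma balancedK_comul_sandwich (M : zmodType) (f : U -> V -> M) x y : balancedK f ->
  balancedK (fun x' y' => \sum_(r <- DU x) \sum_(q <- DU y)
    f (r.1 * x' * q.1) (pi r.2 * y' * pi q.2)).
Proof.
move=> hf; split=> [x' y1 y2|x1 x2 y'|x' a y'].
- rewrite -big_split; apply: eq_bigr => r _; rewrite -big_split.
  by apply: eq_bigr => q _; rewrite mulrDr mulrDl (bal_addr hf).
- rewrite -big_split; apply: eq_bigr => r _; rewrite -big_split.
  by apply: eq_bigr => q _; rewrite mulrDr mulrDl (bal_addl hf).
pose psi al be := \sum_(q <- DU y) f (al * x' * q.1) (pi be * y' * pi q.2).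
have hpsi : balancedL psi.
  apply: balanced2_sum => q; split=> [al b1 b2|a1 a2 be|al c be].
  - by rewrite pi_add !mulrDl (bal_addr hf).
  - by rewrite !mulrDl (bal_addl hf).
  - by rewrite -!mulrA (bal_act hf) pi_mul pi_s !mulrA.
transitivity (\sum_(r <- DU x) psi (r.1 * tU a) r.2).
  by apply: eq_bigr => r _; apply: eq_bigr => q _; rewrite !mulrA.
rewrite (comul_sum_takeuchi HBU hpsi); apply: eq_bigr => r _.
by apply: eq_bigr => q _; rewrite pi_mul pi_s !mulrA.
Qed.

Lemma kernel_comul_sandwich b x y : B b ->
  forall (M : zmodType) (f : U -> V -> M), balancedK f ->
  \sum_(q <- DU (x * b * y)) f q.1 (pi q.2) =
  \sum_(r <- DU x) \sum_(q <- DU y) f (r.1 * b * q.1) (pi (r.2 * q.2)).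
Proof.
move=> hb M f hf.
pose G x' y' := \sum_(q <- DU y) f (x' * q.1) (pi (y' * q.2)).
have hG : balancedL G.
  apply: balanced2_sum => q; split=> [x' y1 y2|x1 x2 y'|x' a y'].
  - by rewrite mulrDl pi_add (bal_addr hf).
  - by rewrite mulrDl (bal_addl hf).
  - by rewrite -mulrA (bal_act hf) !pi_mul pi_s mulrA.
rewrite (comul_sumM HBU (balancedK_pi hf)) /=.
transitivity (\sum_(p <- DU (x * b)) G p.1 p.2); first by [].
rewrite (comul_sumM HBU hG) /G /= exchange_big /=.
transitivity (\sum_(c <- DU b) \sum_(r <- DU x) \sum_(q <- DU y)
    f (r.1 * c.1 * q.1) (pi r.2 * pi c.2 * pi q.2)).
  apply: eq_bigr => c _; apply: eq_bigr => r _; apply: eq_bigr => q _.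
  by rewrite !pi_mul.
rewrite (kernel_sum hb (balancedK_comul_sandwich x y hf)); apply: eq_bigr => r _.
by apply: eq_bigr => q _; rewrite mulr1 pi_mul.
Qed.

Lemma kernel_hact u b : B b -> B (hact sU tU DU u b).
Proof.
move=> hb; apply: kernel_of_sum => M f hf.
have hfpi := balancedK_pi hf.
rewrite /hact (comul_sum_big HBU hfpi) (additive_fun_sum (g := fun x => f x 1)); last first.
  by move=> x1 x2; rewrite (bal_addl hf).
pose F x y z := \sum_(r <- DU x) f (r.1 * (b * y)) (pi (r.2 * z)).
transitivity (\sum_(w <- transl sU tU DU u) \sum_(q <- DU w.2) F w.1 q.1 q.2).
  apply: eq_bigr => w _; rewrite (kernel_comul_sandwich _ _ hb hf) exchange_big.
  by apply: eq_bigr => q _; apply: eq_bigr => r _; rewrite mulrA.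
have hbal w z : balancedL (fun x y => f (x * w) (pi (y * z))).
  exact: balancedL_mulr_fst (balancedL_mulr_snd hfpi z) w.
have FD1 x1 x2 y z : F (x1 + x2) y z = F x1 y z + F x2 y z.
  by rewrite /F (comul_sumD HBU (hbal (b * y) z)).
have FD2 x y1 y2 z : F x (y1 + y2) z = F x y1 z + F x y2 z.
  by rewrite /F -big_split; apply: eq_bigr => r _; rewrite !mulrDr (bal_addl hf).
have FD3 x y z1 z2 : F x y (z1 + z2) = F x y z1 + F x y z2.
  by rewrite /F -big_split; apply: eq_bigr => r _; rewrite mulrDr pi_add (bal_addr hf).
have Ftt a x y z : F (x * tU a) y z = F x y (tU a * z).
  rewrite /F (comul_sum_tr HBU (hbal (b * y) z)).
  by apply: eq_bigr => r _; rewrite !mulrA.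
have Fts a x y z : F x (tU a * y) z = F x y (sU a * z).
  transitivity (\sum_(r <- DU x) f (r.1 * tU a * (b * y)) (pi (r.2 * z))).
    by apply: eq_bigr => r _; rewrite (mulrA b) -(kernel_tcomm a hb) !mulrA.
  by rewrite (comul_sum_takeuchi HBU (hbal (b * y) z)); apply: eq_bigr => r _; rewrite !mulrA.
rewrite (transl_comul_minus HBU HinjU HsurjU FD1 FD2 FD3 Ftt Fts u).
apply: eq_bigr => w _.
have := galois_transl HsurjU w.1 (balancedL_mulr_fst hfpi (b * w.2)).
rewrite pi_one mulrA => <-.
by apply: eq_bigr => p _; apply: eq_bigr => r _; rewrite !mulrA.
Qed.

End HopfKernel.

Theorem lemma2p6 (k : comNzRingType) (A U V : algType k)
  (sU tU : A -> U) (DU : U -> seq (U * U)) (eU : U -> A)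
  (sV tV : A -> V) (DV : V -> seq (V * V)) (eV : V -> A)
  (pi : U -> V) :
  is_left_hopf_algebroid sU tU DU eU ->
  is_left_hopf_algebroid sV tV DV eV ->
  is_bialgebroid_morphism sU tU DU eU sV tV DV eV pi ->
  (forall v : V, exists u : U, pi u = v) ->
  let B := left_hopf_kernel tU DU sV pi in
  [/\ [/\ B 0, B 1,
          forall b b', B b -> B b' -> B (b - b') &
          forall b b', B b -> B b' -> B (b * b')],
      forall a, B (sU a) &
      forall a b, B b -> tU a * b = b * tU a] /\
  [/\ forall u b l1 l2, B b ->
        teqL sU tU (galois_map DU l1) [:: (u, 1)] ->
        teqL sU tU (galois_map DU l2) [:: (u, 1)] ->
        \sum_(p <- l1) p.1 * b * p.2 = \sum_(p <- l2) p.1 * b * p.2,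
      forall u b, B b -> B (hact sU tU DU u b),
      [/\ forall u v b, B b ->
            hact sU tU DU (u + v) b = hact sU tU DU u b + hact sU tU DU v b,
          forall (c : k) u b, B b -> hact sU tU DU (c *: u) b = c *: hact sU tU DU u b,
          forall u b b', B b -> B b' ->
            hact sU tU DU u (b + b') = hact sU tU DU u b + hact sU tU DU u b',
          forall b, B b -> hact sU tU DU 1 b = b &
          forall u v b, B b ->
            hact sU tU DU (u * v) b = hact sU tU DU u (hact sU tU DU v b)],
      (* the action descends to |>U<| (x)_{A^e} >B<| *)
      [/\ forall u a b, B b -> hact sU tU DU (u * sU a) b = hact sU tU DU u (sU a * b) &
          forall u a b, B b -> hact sU tU DU (u * tU a) b = hact sU tU DU u (b * sU a)] &
      [/\ forall u, hact sU tU DU u 1 = sU (eU u) &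
          forall u b b', B b -> B b' ->
            hact sU tU DU u (b * b') =
            \sum_(p <- DU u) hact sU tU DU p.1 b * hact sU tU DU p.2 b']].
Proof.
move=> [HBU Hinj Hsurj] [HBV _ _] [[pa _ pm p1] ps _ pe _] _ B.
have bt b : B b -> forall a, tU a * b = b * tU a.
  by move=> hb a; apply: (kernel_tcomm HBU HBV pm ps pe).
split; split.
- split; [exact: kernel0 HBU pa pm ps | exact: kernel1 HBU pa pm p1 ps
         | exact: kernelB HBU pa pm ps | exact: kernelM HBU HBV pa pm ps pe].
- exact: kernel_s HBU pa pm p1 ps.
- by move=> a b /bt.
- by move=> u b l1 l2 /bt /hact_wd; apply.
- exact: kernel_hact HBU Hinj Hsurj HBV pa pm p1 ps pe.
- split=> [u v b /bt bt'|c u b /bt bt'|u b b' _ _|b /bt bt'|u v b /bt bt'].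
  + by rewrite (hactDl Hinj Hsurj bt').
  + by rewrite (hactZl HBU Hinj Hsurj bt').
  + by rewrite hactDr.
  + by rewrite (hact1l HBU Hinj Hsurj bt').
  + by rewrite (hactMl HBU Hinj Hsurj bt').
- split=> u a b /bt bt'.
  + by rewrite (hact_sr HBU Hinj Hsurj bt').
  + by rewrite (hact_tr HBU Hinj Hsurj bt').
- split=> [u|u b b' /bt bt' /bt bt''].
  + by rewrite (hact_unit HBU Hsurj).
  + by rewrite (hactM HBU Hinj Hsurj u bt' bt'').
Qed.
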